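(* Let $A:\mathbb{R}^d\rightrightarrows\mathbb{R}^d$ be maximal monotone with $A^{-1}(0)\neq\emptyset$ and $\mathrm{dom}(A)$ closed and bounded, let $p\geq1$ be an integer, $\sigma\in(0,1)$, $\theta>0$, $x_0\in\mathbb{R}^d$. Suppose sequences $\lambda_k>0$, $y_k,v_k,x_k\in\mathbb{R}^d$, $\epsilon_k\geq0$ ($k\geq1$) satisfy, for every $k\geq0$, \[ v_{k+1}\in A^{\epsilon_{k+1}}(y_{k+1}),\quad \|\lambda_{k+1}v_{k+1}+y_{k+1}-x_k\|^2+2\lambda_{k+1}\epsilon_{k+1}\leq\sigma^2\|y_{k+1}-x_k\|^2,\quad \lambda_{k+1}\|y_{k+1}-x_k\|^{p-1}\geq\theta, \] and $x_{k+1}=x_k-\lambda_{k+1}v_{k+1}$. Let $\tilde y_k=\frac{1}{\sum_{i=1}^k\lambda_i}\sum_{i=1}^k\lambda_iy_i$. Then for integers $k\geq1$, \[ \textsc{gap}(\tilde y_k)=O(k^{-\frac{p+1}{2}}),\qquad \inf_{1\leq i\leq k}\|v_i\|=O(k^{-\frac p2}),\qquad \inf_{1\leq i\leq k}\epsilon_i=O(k^{-\frac{p+1}{2}}). \] In addition, if $\epsilon_k=0$ for all $k\geq1$ and the error bound condition holds (there exist $\delta,\kappa>0$ such that $\textsc{dist}(0,Ax)\leq\delta$ implies $\textsc{dist}(x,A^{-1}(0))\leq\kappa\,\textsc{dist}(0,Ax)$), then $\{x_k\}$ converges to $A^{-1}(0)$ at a local linear rate, i.e., there exist $k_0$ and $q\in(0,1)$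 with $\textsc{dist}(x_{k+1},A^{-1}(0))^2\leq q\,\textsc{dist}(x_k,A^{-1}(0))^2$ for all $k\geq k_0$.
   Context: The $\epsilon$-enlargement of $A$ is $A^{\epsilon}(x)=\{v\in\mathbb{R}^d:\langle x-\tilde x,v-\tilde v\rangle\geq-\epsilon\ \forall\tilde x\in\mathbb{R}^d,\ \forall\tilde v\in A\tilde x\}$. The gap function is $\textsc{gap}(x)=\sup_{z\in\mathrm{dom}(A)}\sup_{\xi\in Az}\langle\xi,x-z\rangle$; $\textsc{dist}(x,S)=\inf_{z\in S}\|x-z\|$. These sequences are the iterates of the paper's ''conceptual algorithmic framework'' (run without hitting the stopping test $0\in Ax_k$). *)

From HB Require Import structures.
From mathcomp Require Import all_boot all_order all_algebra.
From mathcomp Require Import all_classical all_reals all_analysis.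
Set Implicit Arguments. Unset Strict Implicit. Unset Printing Implicit Defensive.
Import Order.TTheory GRing.Theory Num.Theory.
Import numFieldNormedType.Exports.
Local Open Scope classical_set_scope.
Local Open Scope ring_scope.

Section Defs.
Variables (R : realType) (d : nat).

Definition dotp (u v : 'rV[R]_d) : R := \sum_(i < d) u ord0 i * v ord0 i.
Definition enorm (u : 'rV[R]_d) : R := Num.sqrt (dotp u u).

Definition operator := 'rV[R]_d -> set 'rV[R]_d.

Definition monotone_op (A : operator) : Prop :=
  forall x y u v, A x u -> A y v -> 0 <= dotp (x - y) (u - v).

Definition maximal_monotone (A : operator) : Prop :=
  monotone_op A /\
  forall B : operator, monotone_op B -> (forall x v, A x v -> B x v) ->
    forall x v, B x v -> A x v.

Definition opdom (A : operator) : set 'rV[R]_d := [set x | exists v, A x v].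

Definition zeros (A : operator) : set 'rV[R]_d := [set x | A x 0].

Definition enlargement (A : operator) (eps : R) : operator :=
  fun x => [set v | forall xt vt, A xt vt -> - eps <= dotp (x - xt) (v - vt)].

Definition gap (A : operator) (x : 'rV[R]_d) : \bar R :=
  ereal_sup [set e : \bar R | exists z xi,
               opdom A z /\ A z xi /\ e = (dotp xi (x - z))%:E].

(* distance to a set, valued in the extended reals (= +oo for the empty set) *)
Definition setdist (x : 'rV[R]_d) (S : set 'rV[R]_d) : \bar R :=
  ereal_inf [set (enorm (x - z))%:E | z in S].

End Defs.

(* The HPE error criterion implies the Fejer-type inequality
     2 lambda_{k+1} (<v_{k+1}, y_{k+1} - z> + eps_{k+1}) + (1 - sigma^2) |y_{k+1} - x_k|^2
       <= |x_k - z|^2 - |x_{k+1} - z|^2,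
   which telescopes.  For a zero z of A it makes sum_k |y_{k+1} - x_k|^2 finite, so among
   the first k steps one has length O(k^(-1/2)); at that step the large-step condition
   lambda |y - x|^(p-1) >= theta bounds |v| and eps, and, summed over all steps, it forces
   sum_{i <= k} lambda_i to grow at least like k^((p+1)/2).  For z in dom A and xi in A z,
   the enlargement inequality bounds (sum_i lambda_i) <xi, ytilde_k - z> by |x_0 - z|^2 / 2,
   which is bounded since dom A is; dividing gives the gap rate.  For the linear rate, eps = 0 puts v_{k+1} in A y_{k+1} by maximality; once the
   steps are small, the error bound gives dist(x_k, A^-1 0)^2 = O(|y_{k+1} - x_k|^2), and the
   Fejer inequality over z in A^-1 0 turns the decrease (1 - sigma^2) |y_{k+1} - x_k|^2 into
   a fixed fraction of dist(x_k, A^-1 0)^2. *)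

From HB Require Import structures.
From mathcomp Require Import all_boot all_order all_algebra.
From mathcomp Require Import all_classical all_reals all_analysis.
From mathcomp Require Import ring lra.
Import Order.TTheory GRing.Theory Num.Theory.
Import numFieldNormedType.Exports.
Local Open Scope classical_set_scope.
Local Open Scope ring_scope.

Set Implicit Arguments. Unset Strict Implicit. Unset Printing Implicit Defensive.

Section RealFacts.
Variable R : realType.

Lemma sum_le_telescope (g f : nat -> R) :
  (forall k, g k <= f k - f k.+1) -> forall n, \sum_(k < n) g k <= f 0%N - f n.
Proof.
move=> gf n; rewrite -opprB -(telescope_sumr f (leq0n n)) -sumrN big_mkord.
by apply: ler_sum => k _; rewrite opprB.
Qed.

Lemma exists_le_mean (f : nat -> R) k : (0 < k)%N ->
  exists2 i, (i < k)%N & k%:R * f i <= \sum_(j < k) f j.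
Proof.
move=> k_gt0; have [i _ imin] := @arg_minP _ _ 'I_k (Ordinal k_gt0) xpredT f isT.
exists i => //; rewrite mulr_natl -[k in _ *+ k]card_ord -sumr_const.
by apply: ler_sum => j _; exact: imin.
Qed.

Lemma summable_eventually_lt (u : nat -> R) (B e : R) :
  (forall k, 0 <= u k) -> (forall n, \sum_(k < n) u k <= B) -> 0 < e ->
  exists k0, forall k, (k0 <= k)%N -> u k < e.
Proof.
move=> u_ge0 u_sum e_gt0.
have : cvgn (series u).
  apply: nondecreasing_is_cvgn; last by exists B => _ [n _ <-]; rewrite /series /= big_mkord.
  by apply/nondecreasing_seqP => n; rewrite /series /= big_nat_recr //= lerDl.
move=> /cvg_series_cvg_0 /cvgr0_norm_lt /(_ e e_gt0) [k0 _ small].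
by exists k0 => k /small /=; rewrite ger0_norm.
Qed.

Lemma powR_Nhalf (r : R) (n : nat) : 0 < r ->
  r `^ (- (n%:R / 2)) = (Num.sqrt r ^+ n)^-1.
Proof.
by move=> r_gt0; rewrite powRN mulrC powRrM powR12_sqrt ?ltW // powR_mulrn.
Qed.

Lemma inf_image_le (f : nat -> R) k i :
  (forall j, (0 < j)%N -> 0 <= f j) -> (1 <= i <= k)%N ->
  inf [set f j | j in [set j : nat | (1 <= j <= k)%N]] <= f i.
Proof.
move=> f_ge0 ik; apply: ge_inf; last by exists i.
by exists 0 => _ [j /andP[j_gt0 _] <-]; exact: f_ge0.
Qed.

End RealFacts.

Section InnerProduct.
Variables (R : realType) (d : nat).
Local Notation V := 'rV[R]_d.
Implicit Types (u w z : V) (a : R).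

Lemma dotpC u w : dotp u w = dotp w u.
Proof. by apply: eq_bigr => i _; rewrite mulrC. Qed.

Lemma dotpDl u w z : dotp (u + w) z = dotp u z + dotp w z.
Proof. by rewrite /dotp -big_split; apply: eq_bigr => i _; rewrite mxE mulrDl. Qed.

Lemma dotpZl a u z : dotp (a *: u) z = a * dotp u z.
Proof. by rewrite /dotp mulr_sumr; apply: eq_bigr => i _; rewrite mxE mulrA. Qed.

Lemma dotpNl u z : dotp (- u) z = - dotp u z.
Proof. by rewrite /dotp -sumrN; apply: eq_bigr => i _; rewrite mxE mulNr. Qed.

Lemma dotp0l z : dotp 0 z = 0.
Proof. by rewrite /dotp big1 // => i _; rewrite mxE mul0r. Qed.

Lemma dotpBl u w z : dotp (u - w) z = dotp u z - dotp w z.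
Proof. by rewrite dotpDl dotpNl. Qed.

Lemma dotpDr u w z : dotp z (u + w) = dotp z u + dotp z w.
Proof. by rewrite dotpC dotpDl !(dotpC z). Qed.

Lemma dotpBr u w z : dotp z (u - w) = dotp z u - dotp z w.
Proof. by rewrite dotpC dotpBl !(dotpC z). Qed.

Lemma dotpNr u z : dotp z (- u) = - dotp z u.
Proof. by rewrite dotpC dotpNl dotpC. Qed.

Lemma dotpZr a u z : dotp z (a *: u) = a * dotp z u.
Proof. by rewrite dotpC dotpZl dotpC. Qed.

Lemma dotp_sumr (I : Type) (r : seq I) (P : pred I) (F : I -> V) z :
  dotp z (\sum_(i <- r | P i) F i) = \sum_(i <- r | P i) dotp z (F i).
Proof.
elim/big_rec2: _ => [|i a b _ <-]; last by rewrite dotpDr.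
by rewrite /dotp big1 // => i _; rewrite mxE mulr0.
Qed.

Lemma dotpp_ge0 u : 0 <= dotp u u.
Proof. by apply: sumr_ge0 => i _; rewrite -expr2 sqr_ge0. Qed.

Lemma enorm_ge0 u : 0 <= enorm u.
Proof. exact: sqrtr_ge0. Qed.

Lemma enorm_sqr u : enorm u ^+ 2 = dotp u u.
Proof. by rewrite sqr_sqrtr // dotpp_ge0. Qed.

Lemma enormZ a u : enorm (a *: u) = `|a| * enorm u.
Proof. by rewrite /enorm dotpZl dotpZr mulrA -expr2 sqrtrM ?sqr_ge0 // sqrtr_sqr. Qed.

Lemma enormBC u w : enorm (u - w) = enorm (w - u).
Proof. by rewrite /enorm -opprB dotpNl dotpNr opprK. Qed.

Lemma enormD_sqr u w :
  enorm (u + w) ^+ 2 = enorm u ^+ 2 + 2 * dotp u w + enorm w ^+ 2.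
Proof. by rewrite !enorm_sqr dotpDl !dotpDr (dotpC w u); ring. Qed.

Lemma enormB_sqr u w :
  enorm (u - w) ^+ 2 = enorm u ^+ 2 - 2 * dotp u w + enorm w ^+ 2.
Proof. by rewrite !enorm_sqr dotpBl !dotpBr (dotpC w u); ring. Qed.

Lemma enormB_sqr_le u w :
  enorm (u - w) ^+ 2 <= 2 * enorm u ^+ 2 + 2 * enorm w ^+ 2.
Proof.
have := sqr_ge0 (enorm (u + w)); rewrite enormB_sqr enormD_sqr; lra.
Qed.

Lemma dotp_wavg (I : Type) (r : seq I) (P : pred I) (lam : I -> R) (F : I -> V)
    xi z :
  \sum_(i <- r | P i) lam i != 0 ->
  (\sum_(i <- r | P i) lam i)
    * dotp xi ((\sum_(i <- r | P i) lam i)^-1 *: \sum_(i <- r | P i) lam i *: F i - z)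
  = \sum_(i <- r | P i) lam i * dotp xi (F i - z).
Proof.
move=> Lam_neq0; under [RHS]eq_bigr => i _ do rewrite dotpBr mulrBr.
rewrite sumrB -mulr_suml dotpBr dotpZr dotp_sumr mulrBr mulVKf //.
by under eq_bigr => i _ do rewrite dotpZr.
Qed.

End InnerProduct.

Section Operators.
Variables (R : realType) (d : nat).
Local Notation V := 'rV[R]_d.
Implicit Types (A : operator R d) (w xk y v z xi : V).

Lemma enlargement_dotp_le A e y v z xi :
  enlargement A e y v -> A z xi -> dotp xi (y - z) <= dotp v (y - z) + e.
Proof. by move=> /(_ z xi) enl /enl; rewrite [dotp (y - z) _]dotpBr !(dotpC (y - z)); lra. Qed.

Lemma enlargement0_maximal A y v :
  maximal_monotone A -> enlargement A 0 y v -> A y v.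
Proof.
move=> [A_mono A_max] enl.
pose B : operator R d := fun z => [set w | A z w \/ (z = y /\ w = v)].
apply: (A_max B) => [|z w Azw|]; [|by left|by right].
move=> x1 x2 u1 u2 [Au1|[-> ->]] [Au2|[-> ->]].
- exact: A_mono.
- have := enl _ _ Au1; rewrite oppr0.
  by rewrite -(opprB y) -(opprB v) dotpNl dotpNr opprK.
- by have := enl _ _ Au2; rewrite oppr0.
- by rewrite subrr dotp0l.
Qed.

(* Exact identity:
   |xk - z|^2 - |xk - lam v - z|^2 = 2 lam <v, y - z> + |y - xk|^2 - |lam v + y - xk|^2. *)
Lemma hpe_fejer (lam eps sigma : R) xk y v z :
  enorm (lam *: v + y - xk) ^+ 2 + 2 * lam * eps <= sigma ^+ 2 * enorm (y - xk) ^+ 2 ->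
  2 * lam * (dotp v (y - z) + eps) + (1 - sigma ^+ 2) * enorm (y - xk) ^+ 2
    <= enorm (xk - z) ^+ 2 - enorm (xk - lam *: v - z) ^+ 2.
Proof.
have -> : y - z = (y - xk) + (xk - z) by rewrite addrA subrK.
have -> : lam *: v + y - xk = lam *: v + (y - xk) by rewrite addrA.
have -> : xk - lam *: v - z = (xk - z) - lam *: v by rewrite addrAC.
set w := y - xk; set r := xk - z.
rewrite (enormD_sqr (lam *: v) w) (enormB_sqr r (lam *: v)) dotpDr dotpZl dotpZr.
rewrite (dotpC r v); nra.
Qed.

Lemma hpe_norm_le (lam eps sigma : R) v w :
  0 < lam -> 0 <= eps -> sigma ^+ 2 <= 1 ->
  enorm (lam *: v + w) ^+ 2 + 2 * lam * eps <= sigma ^+ 2 * enorm w ^+ 2 ->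
  lam * enorm v <= 2 * enorm w.
Proof.
move=> lam_gt0 eps_ge0 sigma_le1 err; have lam_ge0 := ltW lam_gt0.
have := enormB_sqr_le (lam *: v + w) w; rewrite addrK enormZ gtr0_norm // => v_le.
have w_le : sigma ^+ 2 * enorm w ^+ 2 <= enorm w ^+ 2 by rewrite ler_piMl ?sqr_ge0.
have lam_eps_ge0 := mulr_ge0 lam_ge0 eps_ge0.
rewrite -(ler_pXn2r (_ : 0 < 2)%N) ?nnegrE ?mulr_ge0 ?enorm_ge0 //.
lra.
Qed.

Lemma hpe_eps_le (lam eps sigma : R) v w : sigma ^+ 2 <= 1 ->
  enorm (lam *: v + w) ^+ 2 + 2 * lam * eps <= sigma ^+ 2 * enorm w ^+ 2 ->
  2 * lam * eps <= enorm w ^+ 2.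
Proof.
move=> sigma_le1 err; have := sqr_ge0 (enorm (lam *: v + w)).
have : sigma ^+ 2 * enorm w ^+ 2 <= enorm w ^+ 2 by rewrite ler_piMl ?sqr_ge0.
lra.
Qed.

End Operators.

Section Distance.
Variables (R : realType) (d : nat).
Local Notation V := 'rV[R]_d.
Implicit Types (x y z : V) (S : set V).

(* Real-valued distance; [fine] sends the value [+oo] of the empty set to [0]. *)
Definition rdist x S : R := fine (setdist x S).

Lemma setdist_ge0 x S : (0 <= setdist x S)%E.
Proof. by apply/ereal_infP => _ [z _ <-]; rewrite lee_fin enorm_ge0. Qed.

Lemma setdist_le x S z : S z -> (setdist x S <= (enorm (x - z))%:E)%E.
Proof. by move=> Sz; apply: ereal_inf_lbound; exists z. Qed.

Lemma setdist_rdist x S : S !=set0 -> setdist x S = (rdist x S)%:E.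
Proof.
move=> [z Sz]; have := setdist_le x Sz; have := setdist_ge0 x S.
by rewrite /rdist; case: (setdist x S).
Qed.

Lemma rdist_ge0 x S : 0 <= rdist x S.
Proof. by have := setdist_ge0 x S; rewrite /rdist; case: (setdist x S). Qed.

Lemma rdist_le x S z : S z -> rdist x S <= enorm (x - z).
Proof.
move=> Sz; have := setdist_le x Sz.
by rewrite (setdist_rdist x (ex_intro _ z Sz)) lee_fin.
Qed.

Lemma rdist_glb x S t : S !=set0 ->
  (forall z, S z -> t <= enorm (x - z)) -> t <= rdist x S.
Proof.
move=> S_neq0 lb; rewrite -lee_fin -setdist_rdist //.
by apply/ereal_infP => _ [z Sz <-]; rewrite lee_fin lb.
Qed.

Lemma rdist_sqr_glb x S t : S !=set0 ->
  (forall z, S z -> t <= enorm (x - z) ^+ 2) -> t <= rdist x S ^+ 2.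
Proof.
move=> S_neq0 lb; case: (lerP t 0) => [t_le0|t_gt0].
  exact: le_trans t_le0 (sqr_ge0 _).
rewrite -(sqr_sqrtr (ltW t_gt0)) ler_pXn2r ?nnegrE ?sqrtr_ge0 ?rdist_ge0 //.
apply: rdist_glb => // z Sz.
by have := lb z Sz; rewrite -ler_sqrt ?sqr_ge0 // sqrtr_sqr ger0_norm ?enorm_ge0.
Qed.

Lemma rdist_sqr_le x y S : S !=set0 ->
  rdist x S ^+ 2 <= 2 * rdist y S ^+ 2 + 2 * enorm (x - y) ^+ 2.
Proof.
move=> S_neq0.
suff : (rdist x S ^+ 2 - 2 * enorm (x - y) ^+ 2) / 2 <= rdist y S ^+ 2 by lra.
apply: rdist_sqr_glb => // z Sz.
have := enormB_sqr_le (x - y) (z - y).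
rewrite opprB addrA subrK (enormBC z) => triangle.
have : rdist x S ^+ 2 <= enorm (x - z) ^+ 2.
  by rewrite ler_pXn2r ?nnegrE ?enorm_ge0 ?rdist_ge0 ?rdist_le.
lra.
Qed.

Lemma rdist_error_bound (A : operator R d) (delta kappa : R) :
  zeros A !=set0 -> 0 <= kappa ->
  (forall z, (setdist 0 (A z) <= delta%:E)%E ->
     (setdist z (zeros A) <= kappa%:E * setdist 0 (A z))%E) ->
  forall z u, A z u -> enorm u <= delta -> rdist z (zeros A) <= kappa * enorm u.
Proof.
move=> zeros_neq0 kappa_ge0 eb z u Azu u_le.
have Az_neq0 : A z !=set0 by exists u.
have := rdist_le 0 Azu; rewrite enormBC subr0 => dist_le.
have := eb z; rewrite !setdist_rdist // -EFinM !lee_fin => /(_ (le_trans dist_le u_le)).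
by move/le_trans; apply; rewrite ler_wpM2l.
Qed.

End Distance.

Section HPE.
Variables (R : realType) (d : nat) (A : operator R d) (p : nat) (sigma theta : R).
Variables (lambda eps : nat -> R) (y v x : nat -> 'rV[R]_d).
Hypotheses (p_gt0 : (0 < p)%N) (sigma2_lt1 : sigma ^+ 2 < 1) (theta_gt0 : 0 < theta).
Hypotheses (lambda_gt0 : forall k, 0 < lambda k.+1) (eps_ge0 : forall k, 0 <= eps k.+1).
Hypothesis v_enl : forall k, enlargement A (eps k.+1) (y k.+1) (v k.+1).
Hypothesis hpe_err : forall k,
  enorm (lambda k.+1 *: v k.+1 + y k.+1 - x k) ^+ 2 + 2 * lambda k.+1 * eps k.+1
    <= sigma ^+ 2 * enorm (y k.+1 - x k) ^+ 2.
Hypothesis large_step : forall k, theta <= lambda k.+1 * enorm (y k.+1 - x k) ^+ p.-1.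
Hypothesis x_next : forall k, x k.+1 = x k - lambda k.+1 *: v k.+1.

Local Notation rho k := (enorm (y k.+1 - x k)).

Let rho_ge0 k : 0 <= rho k. Proof. exact: enorm_ge0. Qed.

Let sigma_gap_gt0 : 0 < 1 - sigma ^+ 2. Proof. by rewrite subr_gt0. Qed.

Let hpe_err_rho k :
  enorm (lambda k.+1 *: v k.+1 + (y k.+1 - x k)) ^+ 2 + 2 * lambda k.+1 * eps k.+1
    <= sigma ^+ 2 * rho k ^+ 2.
Proof. by rewrite addrA hpe_err. Qed.

Lemma fejer_step k z xi : A z xi ->
  2 * lambda k.+1 * dotp xi (y k.+1 - z) + (1 - sigma ^+ 2) * rho k ^+ 2
    <= enorm (x k - z) ^+ 2 - enorm (x k.+1 - z) ^+ 2.
Proof.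
move=> Azxi; rewrite x_next.
apply: le_trans (hpe_fejer z (hpe_err k)); rewrite lerD2r ler_pM2l ?mulr_gt0 //.
exact: enlargement_dotp_le (v_enl k) Azxi.
Qed.

Lemma sum_rho_sqr_le z : zeros A z ->
  forall n, \sum_(k < n) rho k ^+ 2 <= enorm (x 0%N - z) ^+ 2 / (1 - sigma ^+ 2).
Proof.
move=> Az0 n; rewrite ler_pdivlMr // mulrC mulr_sumr.
have step k : (1 - sigma ^+ 2) * rho k ^+ 2
    <= enorm (x k - z) ^+ 2 - enorm (x k.+1 - z) ^+ 2.
  by have := fejer_step k Az0; rewrite dotp0l mulr0 add0r.
by apply: le_trans (sum_le_telescope step n) _; rewrite gerBl sqr_ge0.
Qed.

Lemma sum_lambda_dotp_le z xi : A z xi -> forall n,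
  2 * \sum_(k < n) lambda k.+1 * dotp xi (y k.+1 - z) <= enorm (x 0%N - z) ^+ 2.
Proof.
move=> Azxi n; rewrite mulr_sumr.
have step k : 2 * (lambda k.+1 * dotp xi (y k.+1 - z))
    <= enorm (x k - z) ^+ 2 - enorm (x k.+1 - z) ^+ 2.
  have := fejer_step k Azxi; have := mulr_ge0 (ltW sigma_gap_gt0) (sqr_ge0 (rho k)).
  lra.
by apply: le_trans (sum_le_telescope step n) _; rewrite gerBl sqr_ge0.
Qed.

Lemma norm_v_le k : theta * enorm (v k.+1) <= 2 * rho k ^+ p.
Proof.
have lv : lambda k.+1 * enorm (v k.+1) <= 2 * rho k.
  exact: hpe_norm_le (lambda_gt0 k) (eps_ge0 k) (ltW sigma2_lt1) (hpe_err_rho k).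
have := ler_wpM2r (enorm_ge0 (v k.+1)) (large_step k).
have := ler_wpM2l (exprn_ge0 p.-1 (rho_ge0 k)) lv.
have -> : rho k ^+ p = rho k ^+ p.-1 * rho k by rewrite -exprSr prednK.
lra.
Qed.

Lemma eps_le k : 2 * theta * eps k.+1 <= rho k ^+ p.+1.
Proof.
have le : 2 * lambda k.+1 * eps k.+1 <= rho k ^+ 2.
  exact: hpe_eps_le (ltW sigma2_lt1) (hpe_err_rho k).
have := ler_wpM2r (eps_ge0 k) (large_step k).
have := ler_wpM2l (exprn_ge0 p.-1 (rho_ge0 k)) le.
have -> : rho k ^+ p.+1 = rho k ^+ p.-1 * rho k ^+ 2 by rewrite -exprD addn2 prednK.
lra.
Qed.

(* Either [rho k <= b], and the large-step condition gives [lambda b^(p-1) >= theta],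
   or [rho k > b], and the left-hand side is negative. *)
Lemma lambda_lb k b : 0 < b ->
  theta - theta / b ^+ 2 * rho k ^+ 2 <= lambda k.+1 * b ^+ p.-1.
Proof.
move=> b_gt0; have lam_ge0 := ltW (lambda_gt0 k); have b_ge0 := ltW b_gt0.
have rhs_ge0 := mulr_ge0 lam_ge0 (exprn_ge0 p.-1 b_ge0).
case: (lerP (rho k) b) => [rho_le|b_lt].
  have := mulr_ge0 (divr_ge0 (ltW theta_gt0) (sqr_ge0 b)) (sqr_ge0 (rho k)).
  have : lambda k.+1 * rho k ^+ p.-1 <= lambda k.+1 * b ^+ p.-1.
    by rewrite ler_wpM2l // lerXn2r ?nnegrE ?rho_ge0.
  have := large_step k; lra.
have : theta <= theta / b ^+ 2 * rho k ^+ 2.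
  by rewrite mulrAC ler_pdivlMr ?exprn_gt0 // ler_pM2l // ltW // ltrXn2r.
lra.
Qed.

Lemma sum_lambda_lb k b : 0 < b -> 2 * \sum_(i < k) rho i ^+ 2 <= b ^+ 2 * k%:R ->
  theta * k%:R <= 2 * b ^+ p.-1 * \sum_(i < k) lambda i.+1.
Proof.
move=> b_gt0 rho_sum.
have : \sum_(i < k) (theta - theta / b ^+ 2 * rho i ^+ 2)
    <= \sum_(i < k) lambda i.+1 * b ^+ p.-1.
  by apply: ler_sum => i _; exact: lambda_lb.
rewrite sumrB sumr_const card_ord -mulr_sumr -mulr_suml -mulr_natr.
have : theta / b ^+ 2 * \sum_(i < k) rho i ^+ 2 <= theta * k%:R / 2.
  have -> : theta * k%:R / 2 = theta / b ^+ 2 * (b ^+ 2 * k%:R / 2).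
    by field; rewrite gt_eqF.
  by rewrite ler_wpM2l ?divr_ge0 ?sqr_ge0 ?(ltW theta_gt0) //; lra.
lra.
Qed.

Lemma exists_small_rho B k : (forall n, \sum_(i < n) rho i ^+ 2 <= B) -> (0 < k)%N ->
  exists2 i, (i < k)%N & rho i <= Num.sqrt B / Num.sqrt k%:R.
Proof.
move=> rho_sum k_gt0; have [i ik mean] := exists_le_mean (fun i => rho i ^+ 2) k_gt0.
have B_ge0 : 0 <= B by have := rho_sum 0%N; rewrite big_ord0.
exists i => //; rewrite ler_pdivlMr ?sqrtr_gt0 ?ltr0n //.
rewrite -(ler_pXn2r (_ : 0 < 2)%N) ?nnegrE ?mulr_ge0 ?sqrtr_ge0 //.
rewrite exprMn (sqr_sqrtr B_ge0) (sqr_sqrtr (ler0n R k)) mulrC.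
exact: le_trans mean (rho_sum k).
Qed.

Lemma inf_norm_v_rate B : (forall n, \sum_(i < n) rho i ^+ 2 <= B) ->
  exists C, forall k, (1 <= k)%N ->
    inf [set enorm (v i) | i in [set i : nat | (1 <= i <= k)%N]] <= C * k%:R `^ (- (p%:R / 2)).
Proof.
move=> rho_sum; exists (2 * Num.sqrt B ^+ p / theta) => k k_gt0.
have [i ik rho_small] := exists_small_rho rho_sum k_gt0.
apply: le_trans (inf_image_le _ (_ : (1 <= i.+1 <= k)%N)) _ => //.
  by move=> j _; exact: enorm_ge0.
rewrite powR_Nhalf ?ltr0n // mulrAC -(mulrA 2) -expr_div_n ler_pdivlMr // mulrC.
apply: le_trans (norm_v_le i) _.
by rewrite ler_wpM2l // lerXn2r ?nnegrE ?divr_ge0 ?sqrtr_ge0.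
Qed.

Lemma inf_eps_rate B : (forall n, \sum_(i < n) rho i ^+ 2 <= B) ->
  exists C, forall k, (1 <= k)%N ->
    inf [set eps i | i in [set i : nat | (1 <= i <= k)%N]] <= C * k%:R `^ (- ((p%:R + 1) / 2)).
Proof.
move=> rho_sum; exists (Num.sqrt B ^+ p.+1 / (2 * theta)) => k k_gt0.
have [i ik rho_small] := exists_small_rho rho_sum k_gt0.
apply: le_trans (inf_image_le _ (_ : (1 <= i.+1 <= k)%N)) _ => //.
  by case=> // j _; exact: eps_ge0.
rewrite natr1 powR_Nhalf ?ltr0n // mulrAC -expr_div_n ler_pdivlMr ?mulr_gt0 // mulrC.
apply: le_trans (eps_le i) _.
by rewrite lerXn2r ?nnegrE ?divr_ge0 ?sqrtr_ge0.
Qed.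

Lemma sum_lambda_rate B k : 0 < B -> (forall n, \sum_(i < n) rho i ^+ 2 <= B) ->
  (0 < k)%N ->
  theta * Num.sqrt k%:R ^+ p.+1 <= 2 * Num.sqrt (2 * B) ^+ p.-1 * \sum_(i < k) lambda i.+1.
Proof.
move=> B_gt0 rho_sum k_gt0; set s := Num.sqrt k%:R.
have s_gt0 : 0 < s by rewrite sqrtr_gt0 ltr0n.
have s2 : s ^+ 2 = k%:R by rewrite sqr_sqrtr ?ler0n.
set c := Num.sqrt (2 * B) ^+ p.-1; set Lam := \sum_(i < k) lambda i.+1.
have b_gt0 : 0 < Num.sqrt (2 * B) / s by rewrite divr_gt0 // sqrtr_gt0 mulr_gt0.
have b2k : (Num.sqrt (2 * B) / s) ^+ 2 * k%:R = 2 * B.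
  by rewrite expr_div_n sqr_sqrtr ?mulr_ge0 ?ltW // -s2 mulfVK ?expf_neq0 ?gt_eqF.
have := sum_lambda_lb (k := k) b_gt0; rewrite b2k ler_pM2l // expr_div_n -/c -/Lam.
move=> /(_ (rho_sum k)) lb; have sp_gt0 : 0 < s ^+ p.-1 by rewrite exprn_gt0.
have := ler_wpM2r (ltW sp_gt0) lb.
have -> : 2 * (c / s ^+ p.-1) * Lam * s ^+ p.-1 = 2 * c * Lam by field; rewrite gt_eqF.
by rewrite -s2 -(mulrA theta) -exprD addnC addn2 prednK.
Qed.

Lemma gap_rate M B : (forall z, opdom A z -> enorm z <= M) -> 0 < B ->
  (forall n, \sum_(i < n) rho i ^+ 2 <= B) ->
  exists C, forall k, (1 <= k)%N ->
    (gap A ((\sum_(1 <= i < k.+1) lambda i)^-1 *: \sum_(1 <= i < k.+1) lambda i *: y i)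
       <= (C * k%:R `^ (- ((p%:R + 1) / 2)))%:E)%E.
Proof.
move=> dom_bdd B_gt0 rho_sum.
set K := enorm (x 0%N) ^+ 2 + M ^+ 2; set c := Num.sqrt (2 * B) ^+ p.-1.
exists (2 * K * c / theta) => k k_gt0.
rewrite natr1 powR_Nhalf ?ltr0n // !big_add1 /= !big_mkord.
set S := Num.sqrt k%:R ^+ p.+1; set Lam := \sum_(i < k) lambda i.+1.
have Lam_lb : theta * S <= 2 * c * Lam := sum_lambda_rate B_gt0 rho_sum k_gt0.
have S_gt0 : 0 < S by rewrite exprn_gt0 // sqrtr_gt0 ltr0n.
have c_gt0 : 0 < c by rewrite exprn_gt0 // sqrtr_gt0 mulr_gt0.
have Lam_gt0 : 0 < Lam.
  have := lt_le_trans (mulr_gt0 theta_gt0 S_gt0) Lam_lb.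
  by rewrite pmulr_rgt0 ?mulr_gt0.
have K_le : K <= Lam * (2 * K * c / theta * S^-1).
  have -> : Lam * (2 * K * c / theta * S^-1) = K * (2 * c * Lam / (theta * S)).
    by field; rewrite !gt_eqF.
  by rewrite ler_peMr ?addr_ge0 ?sqr_ge0 // ler_pdivlMr ?mulr_gt0 // mul1r.
apply: ge_ereal_sup => _ [z [xi [/dom_bdd z_le [Azxi ->]]]]; rewrite lee_fin.
rewrite -(ler_pM2l Lam_gt0) dotp_wavg ?gt_eqF //; apply: le_trans K_le.
have := sum_lambda_dotp_le Azxi k; have := enormB_sqr_le (x 0%N) z.
have : enorm z ^+ 2 <= M ^+ 2 by rewrite lerXn2r ?nnegrE ?enorm_ge0 ?(le_trans (enorm_ge0 z)).
rewrite /K; lra.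
Qed.

Section LinearRate.
Hypothesis zeros_neq0 : zeros A !=set0.

Lemma rdist_fejer k :
  rdist (x k.+1) (zeros A) ^+ 2 <= rdist (x k) (zeros A) ^+ 2 - (1 - sigma ^+ 2) * rho k ^+ 2.
Proof.
rewrite lerBrDr; apply: rdist_sqr_glb => // z Az0.
have := fejer_step k Az0; rewrite dotp0l mulr0 add0r.
have : rdist (x k.+1) (zeros A) ^+ 2 <= enorm (x k.+1 - z) ^+ 2.
  by rewrite lerXn2r ?nnegrE ?rdist_ge0 ?enorm_ge0 ?rdist_le.
lra.
Qed.

Hypothesis A_max : maximal_monotone A.
Hypothesis eps_eq0 : forall k, eps k.+1 = 0.
Variables delta kappa : R.
Hypotheses (delta_gt0 : 0 < delta) (kappa_gt0 : 0 < kappa).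
Hypothesis error_bound : forall z u, A z u -> enorm u <= delta ->
  rdist z (zeros A) <= kappa * enorm u.

Let c := 2 * kappa / theta.

Let c_ge0 : 0 <= c.
Proof. exact: divr_ge0 (mulr_ge0 (ler0n _ 2) (ltW kappa_gt0)) (ltW theta_gt0). Qed.

Lemma rdist_y_le k : rho k <= Num.min 1 (delta * theta / 2) ->
  rdist (y k.+1) (zeros A) <= c * rho k.
Proof.
rewrite le_min => /andP[rho_le1 rho_small].
have v_graph : A (y k.+1) (v k.+1).
  by apply: enlargement0_maximal => //; rewrite -(eps_eq0 k).
have v_le : theta * enorm (v k.+1) <= 2 * rho k.
  apply: le_trans (norm_v_le k) _; rewrite ler_pM2l //.
  by rewrite -(prednK p_gt0) exprS ler_piMr ?exprn_ile1.
apply: le_trans (error_bound v_graph _) _.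
  by rewrite -(ler_pM2l theta_gt0); apply: le_trans v_le _; lra.
rewrite /c mulrAC ler_pdivlMr //; have := ler_wpM2l (ltW kappa_gt0) v_le; lra.
Qed.

Lemma rdist_x_le k : rho k <= Num.min 1 (delta * theta / 2) ->
  rdist (x k) (zeros A) ^+ 2 <= 2 * (1 + c ^+ 2) * rho k ^+ 2.
Proof.
move=> rho_small; apply: le_trans (rdist_sqr_le _ (y k.+1) zeros_neq0) _.
have : rdist (y k.+1) (zeros A) ^+ 2 <= (c * rho k) ^+ 2.
  apply: lerXn2r; rewrite ?nnegrE ?rdist_ge0 ?rdist_y_le //.
  exact: mulr_ge0 c_ge0 (rho_ge0 k).
by rewrite (enormBC (x k)) exprMn; lra.
Qed.

Lemma rdist_linear_rate B : (forall n, \sum_(i < n) rho i ^+ 2 <= B) ->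
  exists k0 q, 0 < q < 1 /\ forall k, (k0 <= k)%N ->
    rdist (x k.+1) (zeros A) ^+ 2 <= q * rdist (x k) (zeros A) ^+ 2.
Proof.
move=> rho_sum; set eta := Num.min 1 (delta * theta / 2).
have eta_gt0 : 0 < eta by rewrite lt_min ltr01 divr_gt0 ?mulr_gt0.
have [k0 rho_small] := summable_eventually_lt (u := fun k => rho k ^+ 2)
  (fun k => sqr_ge0 _) rho_sum (exprn_gt0 2 eta_gt0).
set m := 2 * (1 + c ^+ 2).
have m_gt0 : 0 < m by rewrite mulr_gt0 ?ltr_pwDl ?sqr_ge0.
have gap_gt0 : 0 < (1 - sigma ^+ 2) / m by rewrite divr_gt0.
exists k0, (1 - (1 - sigma ^+ 2) / m); split.
  have : (1 - sigma ^+ 2) / m < 1.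
    rewrite ltr_pdivrMr // mul1r /m; have := sqr_ge0 c; have := sqr_ge0 sigma; lra.
  by move=> ?; apply/andP; split; lra.
move=> k /rho_small /ltW rho_le.
have {}rho_le : rho k <= eta.
  by move: rho_le; rewrite ler_pXn2r ?nnegrE ?rho_ge0 ?(ltW eta_gt0).
have x_le := rdist_x_le rho_le; have := rdist_fejer k.
have : (1 - sigma ^+ 2) / m * rdist (x k) (zeros A) ^+ 2 <= (1 - sigma ^+ 2) * rho k ^+ 2.
  by rewrite mulrAC ler_pdivrMr // -mulrA ler_pM2l // mulrC.
lra.
Qed.

End LinearRate.

End HPE.


Theorem theorem4p1 (R : realType) (d : nat) (A : operator R d)
  (p : nat) (sigma theta : R) (x0 : 'rV[R]_d)
  (lambda : nat -> R) (y v x : nat -> 'rV[R]_d) (eps : nat -> R) :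
  maximal_monotone A ->
  zeros A !=set0 ->
  closed (opdom A) ->
  (exists M : R, forall z, opdom A z -> enorm z <= M) ->
  (1 <= p)%N -> 0 < sigma < 1 -> 0 < theta ->
  x 0%N = x0 ->
  (forall k, (1 <= k)%N -> 0 < lambda k) ->
  (forall k, (1 <= k)%N -> 0 <= eps k) ->
  (forall k, enlargement A (eps k.+1) (y k.+1) (v k.+1)) ->
  (forall k, enorm (lambda k.+1 *: v k.+1 + y k.+1 - x k) ^+ 2
               + 2 * lambda k.+1 * eps k.+1
             <= sigma ^+ 2 * enorm (y k.+1 - x k) ^+ 2) ->
  (forall k, theta <= lambda k.+1 * enorm (y k.+1 - x k) ^+ p.-1) ->
  (forall k, x k.+1 = x k - lambda k.+1 *: v k.+1) ->
  let ytilde (k : nat) := (\sum_(1 <= i < k.+1) lambda i)^-1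
                            *: \sum_(1 <= i < k.+1) lambda i *: y i in
  (exists C : R, forall k : nat, (1 <= k)%N ->
     (gap A (ytilde k) <= (C * k%:R `^ (- ((p%:R + 1) / 2)))%:E)%E)
  /\ (exists C : R, forall k : nat, (1 <= k)%N ->
     inf [set enorm (v i) | i in [set i : nat | (1 <= i <= k)%N]]
       <= C * k%:R `^ (- (p%:R / 2)))
  /\ (exists C : R, forall k : nat, (1 <= k)%N ->
     inf [set eps i | i in [set i : nat | (1 <= i <= k)%N]]
       <= C * k%:R `^ (- ((p%:R + 1) / 2)))
  /\ ((forall k, (1 <= k)%N -> eps k = 0) ->
      (exists delta kappa : R, 0 < delta /\ 0 < kappa /\
         forall z : 'rV[R]_d, (setdist (0%R : 'rV[R]_d) (A z) <= delta%:E)%E ->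
                   (setdist z (zeros A) <= kappa%:E * setdist (0%R : 'rV[R]_d) (A z))%E) ->
      exists (k0 : nat) (q : R), 0 < q < 1 /\
        forall k : nat, (k0 <= k)%N ->
          (setdist (x k.+1) (zeros A) * setdist (x k.+1) (zeros A)
             <= q%:E * (setdist (x k) (zeros A) * setdist (x k) (zeros A)))%E).
Proof.
move=> A_max [zs Azs] _ [M dom_bdd] p_gt0 /andP[sigma_gt0 sigma_lt1] theta_gt0 _
  lambda_gt0 eps_ge0 v_enl hpe_err large_step x_next ytilde.
have sigma2_lt1 : sigma ^+ 2 < 1 by rewrite expr_lt1 // ltW.
have {}lambda_gt0 k : 0 < lambda k.+1 := lambda_gt0 k.+1 (ltn0Sn k).
have {}eps_ge0 k : 0 <= eps k.+1 := eps_ge0 k.+1 (ltn0Sn k).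
set B := enorm (x 0%N - zs) ^+ 2 / (1 - sigma ^+ 2) + 1.
have B_gt0 : 0 < B by rewrite ltr_pwDr ?divr_ge0 ?sqr_ge0 // subr_ge0 ltW.
have rho_sum n : \sum_(k < n) enorm (y k.+1 - x k) ^+ 2 <= B.
  have := sum_rho_sqr_le sigma2_lt1 lambda_gt0 v_enl hpe_err x_next Azs n.
  by move/le_trans; apply; rewrite lerDl.
split; [|split; [|split]].
- exact (gap_rate p_gt0 sigma2_lt1 theta_gt0 lambda_gt0 v_enl hpe_err large_step x_next
    dom_bdd B_gt0 rho_sum).
- exact (inf_norm_v_rate p_gt0 sigma2_lt1 theta_gt0 lambda_gt0 eps_ge0 hpe_err large_step
    rho_sum).
- exact (inf_eps_rate p_gt0 sigma2_lt1 theta_gt0 eps_ge0 hpe_err large_step rho_sum).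
move=> eps_eq0 [delta [kappa [delta_gt0 [kappa_gt0 eb]]]].
have zeros_neq0 : zeros A !=set0 by exists zs.
have [k0 [q [q01 rate]]] := rdist_linear_rate p_gt0 sigma2_lt1 theta_gt0 lambda_gt0 eps_ge0
  v_enl hpe_err large_step x_next zeros_neq0 A_max (fun k => eps_eq0 k.+1 (ltn0Sn k))
  delta_gt0 kappa_gt0 (rdist_error_bound zeros_neq0 (ltW kappa_gt0) eb) rho_sum.
exists k0, q; split => // k /rate.
by rewrite !setdist_rdist // -!EFinM lee_fin !expr2.
Qed.
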